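(* Let $E: y^2=x^3+Ax+B$ ($A,B\in\mathbb{Z}$) be an elliptic curve over $\mathbb{Q}$ and let $M$ be a positive integer with $\max\{10\sqrt{|A|},5\sqrt[3]{|B|}\}\le M$. There exists $D_0$ depending only on $E$ (and $M$) such that for every squarefree integer $D\ge D_0$ and every point $P\in E_D(\mathbb{Z})$ with $x(P)\le MD$, where $E_D: y^2=x^3+D^2Ax+D^3B$, we have $\hat h(P)<1.5\log D$.
   Context: $h$ is the absolute logarithmic Weil height on $\overline{\mathbb{Q}}$; for a point $P$ on an elliptic curve in Weierstrass form, $\hat h(P)=\lim_{n\to\infty} h(x(2^nP))/4^n$ (the canonical height, not normalized by the factor $1/2$). $E_D(\mathbb{Z})$ is the set of points of $E_D$ with integer coordinates. *)

From HB Require Import structures.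
From mathcomp Require Import all_boot all_order all_algebra.
From mathcomp Require Import all_classical all_reals all_analysis.
Set Implicit Arguments. Unset Strict Implicit. Unset Printing Implicit Defensive.
Import Order.TTheory GRing.Theory Num.Theory.
Import numFieldNormedType.Exports.
Local Open Scope ring_scope.

Definition weil_height_rat (R : realType) (r : rat) : R :=
  ln ((Num.max `|numq r| (denq r))%:~R).

(* Points of y^2 = x^3 + a x + b over Q: None is the point at infinity O. *)
Definition ec_point := option (rat * rat).

Definition ec_double (a b : rat) (P : ec_point) : ec_point :=
  match P with
  | None => None
  | Some (x, y) =>
      if y == 0 then None
      else let l := (3 * x ^+ 2 + a) / (2 * y) in
           let x' := l ^+ 2 - 2 * x in
           Some (x', l * (x - x') - y)
  end.

Definition height_x (R : realType) (P : ec_point) : R :=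
  match P with None => 0 | Some (x, _) => weil_height_rat R x end.

(* Canonical height  hat h(P) = lim_{n -> oo} h(x(2^n P)) / 4^n
   (not normalized by 1/2). *)
Definition canonical_height (R : realType) (a b : rat) (P : ec_point) : R :=
  limn (fun n : nat => height_x R (iter n (ec_double a b) P) / 4%:R ^+ n).

Definition squarefree_int (D : int) : Prop :=
  forall d : int, (d * d %| D)%Z -> `|d| = 1.

From HB Require Import structures.
From mathcomp Require Import all_boot all_order all_algebra.
From mathcomp Require Import all_classical all_reals all_analysis.
From mathcomp Require Import ring lra.
Import Order.TTheory GRing.Theory Num.Theory.
Import numFieldNormedType.Exports.
Set Implicit Arguments. Unset Strict Implicit. Unset Printing Implicit Defensive.
Local Open Scope ring_scope.
Local Open Scope classical_set_scope.

(* Over Q(sqrt D), (x, y) |-> (x/D, y/D^(3/2)) identifies E_D with E, so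
   x(2P)/D is obtained from u = x(P)/D by the duplication map phi(u) of E,
   which does not depend on D.  Writing u = p/q in lowest terms, phi(u) is a
   quotient of two integral binary quartics in (p, q) whose coefficients are
   bounded in terms of A and B only, so h(phi(u)) <= ln C + 4 h(u).
   Iterating, h(x(2^n P)/D) + (ln C)/3 grows at most like 4^n, and since
   h(x) <= h(x/D) + ln D this gives hat h(P) <= h(x(P)/D) + (ln C)/3.  For an
   integral point with x <= M D one has |x| <= K D with K = M + |A| + |B| + 1,
   hence hat h(P) <= ln K + ln D + (ln C)/3 < (3/2) ln D once D > K^2 C. *)

Lemma limn_le_geometric (R : realType) (s : nat -> R) (T L k : R) :
  0 <= T -> `|k| < 1 -> (forall n, s n <= T + L * k ^+ n) -> limn s <= T.
Proof.
move=> T0 k1 sle; have [cvg_s|dvg_s] := pselect (cvgn s); last first.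
  (* the limit of a divergent sequence is the junk value 0 *)
  rewrite /lim /lim_in getPN // => l sl; apply: dvg_s.
  by apply/cvg_ex; exists l.
have bound_cvg : (fun n => T + L * k ^+ n) @ \oo --> T.
  rewrite -[X in _ --> X]addr0; apply: cvgD; first exact: cvg_cst.
  exact: cvg_geometric.
rewrite -(cvg_lim _ bound_cvg) //; apply: ler_lim => //.
  by apply/cvg_ex; exists T.
by near=> n; apply: sle.
Unshelve. all: by end_near.
Qed.

Lemma affine_recursion_le (R : realFieldType) (k d : R) (u : nat -> R) : 0 <= k ->
  (forall n, u n.+1 <= (k - 1) * d + k * u n) ->
  forall n, u n + d <= k ^+ n * (u 0%N + d).
Proof.
move=> k0 urec; elim=> [|n IHn]; first by rewrite expr0 mul1r.
apply: le_trans (_ : k * (u n + d) <= _).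
  by have := urec n; rewrite mulrDr mulrBl mul1r; lra.
by rewrite exprS -mulrA ler_wpM2l.
Qed.

Section BinaryForms.
Variable R : realDomainType.

Lemma norm_binary_form_le n (c : nat -> R) (p q H : R) :
  `|p| <= H -> `|q| <= H ->
  `|\sum_(i < n.+1) c i * p ^+ i * q ^+ (n - i)| <= (\sum_(i < n.+1) `|c i|) * H ^+ n.
Proof.
move=> pH qH; rewrite mulr_suml; apply: (le_trans (ler_norm_sum _ _ _)).
apply: ler_sum => i _; rewrite -mulrA normrM ler_wpM2l // normrM !normrX.
rewrite -[in H ^+ n](subnKC (ltnSE (ltn_ord i))) exprD.
by apply: ler_pM; rewrite ?exprn_ge0 // lerXn2r // nnegrE (le_trans _ pH, le_trans _ qH).
Qed.

End BinaryForms.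

(* Homogenised numerator and denominator of the duplication formula
   x(2P) = (x^4 - 2ax^2 - 8bx + a^2) / (4(x^3 + ax + b)) on y^2 = x^3 + ax + b. *)
Definition dup_num (R : nzRingType) (a b p q : R) : R :=
  p ^+ 4 - 2 * a * p ^+ 2 * q ^+ 2 - 8 * b * p * q ^+ 3 + a ^+ 2 * q ^+ 4.

Definition dup_den (R : nzRingType) (a b p q : R) : R :=
  4 * q * (p ^+ 3 + a * p * q ^+ 2 + b * q ^+ 3).

Lemma rmorph_dup_num (R S : nzRingType) (f : {rmorphism R -> S}) a b p q :
  f (dup_num a b p q) = dup_num (f a) (f b) (f p) (f q).
Proof. by rewrite /dup_num !(rmorph_nat, rmorphD, rmorphN, rmorphM, rmorphXn). Qed.

Lemma rmorph_dup_den (R S : nzRingType) (f : {rmorphism R -> S}) a b p q :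
  f (dup_den a b p q) = dup_den (f a) (f b) (f p) (f q).
Proof. by rewrite /dup_den !(rmorph_nat, rmorphD, rmorphM, rmorphXn). Qed.

Section DuplicationBounds.
Variable R : realDomainType.

Definition dup_const (a b : R) : R := 4 * (1 + `|a| + `|b|) ^+ 2.

Lemma dup_const_ge1 (a b : R) : 1 <= dup_const a b.
Proof. by rewrite /dup_const; have := normr_ge0 a; have := normr_ge0 b; nra. Qed.

Lemma norm_dup_num_le (a b p q H : R) : `|p| <= H -> `|q| <= H ->
  `|dup_num a b p q| <= dup_const a b * H ^+ 4.
Proof.
move=> pH qH; have H0 : 0 <= H := le_trans (normr_ge0 _) pH.
pose c := nth 0 [:: a ^+ 2; - 8 * b; - 2 * a; 0; 1].
have -> : dup_num a b p q = \sum_(i < 5) c i * p ^+ i * q ^+ (4 - i).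
  by rewrite !big_ord_recr big_ord0 /= /dup_num /c /= ?subSS ?subn0 ?subnn; ring.
apply: (le_trans (norm_binary_form_le 4 c pH qH)); rewrite ler_wpM2r ?exprn_ge0 //.
rewrite !big_ord_recr big_ord0 /= /c /= !normrM !normrN !normr_nat normr0 normr1.
rewrite /dup_const; have := normr_ge0 a; have := normr_ge0 b; nra.
Qed.

Lemma norm_dup_den_le (a b p q H : R) : `|p| <= H -> `|q| <= H ->
  `|dup_den a b p q| <= dup_const a b * H ^+ 4.
Proof.
move=> pH qH; have H0 : 0 <= H := le_trans (normr_ge0 _) pH.
pose c := nth 0 [:: 4 * b; 4 * a; 0; 4; 0].
have -> : dup_den a b p q = \sum_(i < 5) c i * p ^+ i * q ^+ (4 - i).
  by rewrite !big_ord_recr big_ord0 /= /dup_den /c /= ?subSS ?subn0 ?subnn; ring.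
apply: (le_trans (norm_binary_form_le 4 c pH qH)); rewrite ler_wpM2r ?exprn_ge0 //.
rewrite !big_ord_recr big_ord0 /= /c /= !normrM !normr_nat normr0.
rewrite /dup_const; have := normr_ge0 a; have := normr_ge0 b; nra.
Qed.

End DuplicationBounds.

Definition xdup (a b u : rat) : rat := dup_num a b u 1 / dup_den a b u 1.

Lemma xdup_tangent (a b x y : rat) : y != 0 -> y ^+ 2 = x ^+ 3 + a * x + b ->
  ((3 * x ^+ 2 + a) / (2 * y)) ^+ 2 - 2 * x = xdup a b x.
Proof.
move=> y0 hxy; have -> : b = y ^+ 2 - x ^+ 3 - a * x by rewrite hxy; ring.
rewrite /xdup /dup_num /dup_den; field.
have -> : x ^+ 3 + a * x + (y ^+ 2 - x ^+ 3 - a * x) = y ^+ 2 by ring.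
by rewrite sqrf_eq0 y0.
Qed.

Lemma divf_divr_same (F : fieldType) (x y c : F) : c != 0 -> x / c / (y / c) = x / y.
Proof. by move=> c0; rewrite invf_div mulf_div [c * y]mulrC -mulf_div divff // mulr1. Qed.

Lemma xdup_frac (a b p q : rat) : q != 0 ->
  xdup a b (p / q) = dup_num a b p q / dup_den a b p q.
Proof.
move=> q0; rewrite -[RHS](divf_divr_same _ _ (expf_neq0 4 q0)) /xdup.
by congr (_ * _^-1); rewrite /dup_num /dup_den; field.
Qed.

Lemma xdup_twist (a b D x : rat) : D != 0 ->
  xdup (D ^+ 2 * a) (D ^+ 3 * b) x = D * xdup a b (x / D).
Proof.
move=> D0; rewrite xdup_frac // /xdup.
have -> : dup_num (D ^+ 2 * a) (D ^+ 3 * b) x 1 = dup_num a b x D.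
  by rewrite /dup_num; ring.
have -> : dup_den a b x D = D * dup_den (D ^+ 2 * a) (D ^+ 3 * b) x 1.
  by rewrite /dup_den; ring.
by rewrite (invfM D) mulrCA mulVKf.
Qed.

Definition naive_height (r : rat) : int := Num.max `|numq r| (denq r).

Lemma naive_height_ge1 r : 1 <= naive_height r.
Proof. by rewrite le_max -!gtz0_ge1 denq_gt0 orbT. Qed.

Lemma naive_height_gt0 r : 0 < naive_height r.
Proof. exact: lt_le_trans ltr01 (naive_height_ge1 r). Qed.

Lemma norm_numq_le_naive_height r : `|numq r| <= naive_height r.
Proof. by rewrite le_max lexx. Qed.

Lemma norm_denq_le_naive_height r : `|denq r| <= naive_height r.
Proof. by rewrite normr_denq le_max lexx orbT. Qed.

Lemma naive_height_frac (n d : int) : d != 0 ->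
  naive_height (n%:~R / d%:~R) <= Num.max `|n| `|d|.
Proof.
move=> d0; case: divqP => [d_eq0|k m k0]; first by rewrite d_eq0 eqxx in d0.
have k1 : 1 <= `|k| by rewrite -gtz0_ge1 normr_gt0.
by apply: le_max2; rewrite normrM ?normr_denq ler_peMl // ltW // denq_gt0.
Qed.

Lemma naive_height_mulz (D : int) r : D != 0 ->
  naive_height (D%:~R * r) <= `|D| * naive_height r.
Proof.
move=> D0; rewrite -{1}(divq_num_den r) mulrA -intrM.
apply: (le_trans (naive_height_frac _ (denq_neq0 r))).
rewrite normrM ge_max ler_pM2l ?normr_gt0 ?norm_numq_le_naive_height //=.
apply: le_trans (norm_denq_le_naive_height r) _.
by rewrite ler_peMl ?(ltW (naive_height_gt0 r)) // -gtz0_ge1 normr_gt0.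
Qed.

Lemma naive_height_xdup (A B : int) (u : rat) :
  naive_height (xdup A%:~R B%:~R u) <= dup_const A B * naive_height u ^+ 4.
Proof.
rewrite -{1}[u]divq_num_den xdup_frac ?intr_eq0 ?denq_neq0 //.
rewrite -!(rmorph_dup_num intr, rmorph_dup_den intr) /=.
have pH := norm_numq_le_naive_height u; have qH := norm_denq_le_naive_height u.
have [->|den0] := eqVneq (dup_den A B (numq u) (denq u)) 0.
  (* division by zero yields 0, of height 1 *)
  rewrite invr0 mulr0; apply: mulr_ege1; first exact: dup_const_ge1.
  by apply: exprn_ege1; apply: naive_height_ge1.
apply: le_trans (naive_height_frac _ den0) _.
by rewrite ge_max norm_dup_num_le ?norm_dup_den_le.
Qed.

Section WeilHeight.
Variable R : realType.

Lemma weil_height_ratE (r : rat) : weil_height_rat R r = ln (naive_height r)%:~R.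
Proof. by []. Qed.

Lemma weil_height_rat_ge0 (r : rat) : 0 <= weil_height_rat R r.
Proof. by rewrite ln_ge0 // ler1z naive_height_ge1. Qed.

Lemma ler_ln_int (m n : int) : 0 < m -> m <= n -> ln (m%:~R : R) <= ln (n%:~R : R).
Proof.
by move=> m0 mn; rewrite ler_ln ?ler_int // posrE ltr0z // (lt_le_trans m0).
Qed.

Lemma ln_intrM (m n : int) : 0 < m -> 0 < n ->
  ln ((m * n)%:~R : R) = ln (m%:~R : R) + ln (n%:~R : R).
Proof. by move=> m0 n0; rewrite intrM lnM // posrE ltr0z. Qed.

Lemma ln_dup_const_ge0 (A B : int) : 0 <= ln ((dup_const A B)%:~R : R).
Proof. by rewrite ln_ge0 // ler1z dup_const_ge1. Qed.

Lemma weil_height_xdup (A B : int) (u : rat) :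
  weil_height_rat R (xdup A%:~R B%:~R u) <=
    ln ((dup_const A B)%:~R : R) + 4 * weil_height_rat R u.
Proof.
have C0 : 0 < dup_const A B := lt_le_trans ltr01 (dup_const_ge1 A B).
rewrite !weil_height_ratE -[4]/(4%:R) mulr_natl -lnXn ?ltr0z ?naive_height_gt0 //.
rewrite -rmorphXn -ln_intrM ?exprn_gt0 ?naive_height_gt0 //.
by apply: ler_ln_int (naive_height_gt0 _) (naive_height_xdup A B u).
Qed.

Lemma weil_height_mulz (D : int) (r : rat) : 0 < D ->
  weil_height_rat R (D%:~R * r) <= ln (D%:~R : R) + weil_height_rat R r.
Proof.
move=> D0; rewrite !weil_height_ratE -ln_intrM ?naive_height_gt0 //.
apply: ler_ln_int (naive_height_gt0 _) _.
by rewrite -{2}(gtr0_norm D0) naive_height_mulz ?gt_eqF.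
Qed.

End WeilHeight.

Definition on_curve (a b : rat) (P : ec_point) : Prop :=
  if P is Some (x, y) then y ^+ 2 = x ^+ 3 + a * x + b else True.

Lemma on_curve_double (a b : rat) (P : ec_point) :
  on_curve a b P -> on_curve a b (ec_double a b P).
Proof.
case: P => [[x y]|] //=; case: eqP => // /eqP y0 hxy /=.
have -> : b = y ^+ 2 - x ^+ 3 - a * x by rewrite hxy; ring.
by field; rewrite y0.
Qed.

Lemma on_curve_iter_double (a b : rat) (P : ec_point) n :
  on_curve a b P -> on_curve a b (iter n (ec_double a b) P).
Proof. by move=> PE; elim: n => //= n; apply: on_curve_double. Qed.

Definition scaled_height_x (R : realType) (D : rat) (P : ec_point) : R :=
  if P is Some (x, _) then weil_height_rat R (x / D) else 0.

Section TwistHeights.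
Variables (R : realType) (A B D : int).
Hypothesis D_gt0 : 0 < D.

Let a := (D ^+ 2 * A)%:~R : rat.
Let b := (D ^+ 3 * B)%:~R : rat.
Let c := ln ((dup_const A B)%:~R : R).

Lemma scaled_height_x_double (P : ec_point) : on_curve a b P ->
  scaled_height_x R D%:~R (ec_double a b P) <= c + 4 * scaled_height_x R D%:~R P.
Proof.
have c0 : 0 <= c := ln_dup_const_ge0 R A B.
case: P => [[x y]|] /=; last by rewrite mulr0 addr0.
have hx := weil_height_rat_ge0 R (x / D%:~R).
case: eqP => [_ _ /=|/eqP y0 hxy /=]; first lra.
have D0 : (D%:~R : rat) != 0 by rewrite intr_eq0 gt_eqF.
have intrXM n (z : int) : ((D ^+ n * z)%:~R : rat) = D%:~R ^+ n * z%:~R.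
  by rewrite rmorphM rmorphXn.
rewrite (xdup_tangent y0 hxy) /a /b !intrXM xdup_twist //.
by rewrite mulrC mulKf //; apply: weil_height_xdup.
Qed.

Lemma height_x_le_scaled (P : ec_point) :
  height_x R P <= scaled_height_x R D%:~R P + ln (D%:~R : R).
Proof.
case: P => [[x y]|] /=; last by rewrite add0r ln_ge0 // ler1z -gtz0_ge1.
have D0 : (D%:~R : rat) != 0 by rewrite intr_eq0 gt_eqF.
by rewrite addrC -{1}[x](mulfVK D0) mulrC weil_height_mulz.
Qed.

Lemma canonical_height_le_scaled (P : ec_point) : on_curve a b P ->
  canonical_height R a b P <= scaled_height_x R D%:~R P + c / 3.
Proof.
move=> PE; have c0 : 0 <= c := ln_dup_const_ge0 R A B.
pose u n := scaled_height_x R D%:~R (iter n (ec_double a b) P).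
have u_rec n : u n.+1 <= (4 - 1) * (c / 3) + 4 * u n.
  have -> : (4 - 1) * (c / 3) = c by lra.
  by rewrite /u iterS; apply/scaled_height_x_double/on_curve_iter_double.
have u_le := affine_recursion_le (ler0n R 4) u_rec.
set T := u 0%N + c / 3 in u_le *.
have T0 : 0 <= T.
  rewrite /T /u /=; case: (P) => [[x y]|] /=; last lra.
  by have := weil_height_rat_ge0 R (x / D%:~R); lra.
apply: (limn_le_geometric (L := ln (D%:~R : R)) (k := 4^-1)) => // [|n].
  by rewrite ger0_norm ?invr_ge0 ?ler0n // invf_lt1 ?ltr0n // ltr1n.
have := u_le n; have := height_x_le_scaled (iter n (ec_double a b) P).
rewrite ler_pdivrMr ?exprn_gt0 // -/(u n).
have -> : (T + ln (D%:~R : R) * 4^-1 ^+ n) * 4%:R ^+ n = 4 ^+ n * T + ln (D%:~R : R).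
  by rewrite exprVn; field; rewrite expf_neq0.
lra.
Qed.

End TwistHeights.

Lemma cubic_le_bound (R : realDomainType) (a b D t : R) : 0 < D -> 0 <= a -> 0 <= b ->
  t ^+ 3 <= D ^+ 2 * a * t + D ^+ 3 * b -> t <= (a + b + 1) * D.
Proof.
move=> D0 a0 b0 ht; rewrite leNgt; apply/negP => tD.
have Dt : D < t by apply: le_lt_trans tD; nra.
have sq : (a + b + 1) * D * D < t * t.
  by apply: ltr_pM => //; [apply: mulr_ge0; lra | exact: ltW].
have bt : D ^+ 3 * b <= D ^+ 2 * b * t.
  by rewrite exprSr mulrAC ler_wpM2l ?mulr_ge0 ?exprn_ge0 ?(ltW D0) ?(ltW Dt).
have : (a + b + 1) * D * D * t < t * t * t by rewrite ltr_pM2r //; lra.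
nra.
Qed.

Lemma twist_abs_x_le (R : realDomainType) (A B D M x y : R) : 0 < D -> 0 <= M ->
  y ^+ 2 = x ^+ 3 + D ^+ 2 * A * x + D ^+ 3 * B -> x <= M * D ->
  `|x| <= (M + `|A| + `|B| + 1) * D.
Proof.
move=> D0 M0 hxy xMD; have A0 := normr_ge0 A; have B0 := normr_ge0 B.
have [x0|x0] := lerP 0 x.
  by rewrite ger0_norm //; apply: (le_trans xMD); rewrite ler_pM2r //; lra.
rewrite ltr0_norm //.
suff nxD : - x <= (`|A| + `|B| + 1) * D.
  by apply: le_trans nxD _; rewrite ler_pM2r //; lra.
apply: cubic_le_bound => //.
have Ax : A * x <= `|A| * - x by rewrite -(ltr0_norm x0) -normrM ler_norm.
have D2 : 0 <= D ^+ 2 by rewrite exprn_ge0 ?ltW.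
have D3 : 0 <= D ^+ 3 by rewrite exprn_ge0 ?ltW.
by have := sqr_ge0 y; have := ler_norm B; nra.
Qed.

Theorem lemma6p1 (R : realType) (A B : int) (M : nat) :
  4 * A ^+ 3 + 27 * B ^+ 2 != 0 ->
  (0 < M)%N ->
  10 * Num.sqrt `|A%:~R : R| <= M%:R ->
  5 * powR `|B%:~R : R| (3%:R)^-1 <= M%:R ->
  exists D0 : int,
    forall D : int, squarefree_int D -> D0 <= D ->
    forall x y : int,
      y ^+ 2 = x ^+ 3 + D ^+ 2 * A * x + D ^+ 3 * B ->
      x <= M%:Z * D ->
      canonical_height R ((D ^+ 2 * A)%:~R) ((D ^+ 3 * B)%:~R)
          (Some (x%:~R, y%:~R)) < 3%:R / 2%:R * ln (D%:~R : R).
Proof.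
move=> _ _ _ _.
set K : int := M%:Z + `|A| + `|B| + 1; set C := dup_const A B.
have K0 : 0 < K by rewrite ltr_wpDl ?addr_ge0.
have C0 : 0 < C := lt_le_trans ltr01 (dup_const_ge1 A B).
exists (K ^+ 2 * C + 1) => D _ DK x y hxy xMD.
have D0 : 0 < D by apply: lt_le_trans DK; rewrite ltr_wpDl ?mulr_ge0 ?exprn_ge0 ?ltW.
have xK : `|x| <= K * D by apply: twist_abs_x_le hxy xMD.
have PE : on_curve (D ^+ 2 * A)%:~R (D ^+ 3 * B)%:~R (Some (x%:~R, y%:~R)).
  by rewrite /= -!rmorphXn -!rmorphM -!rmorphD hxy.
apply: le_lt_trans (canonical_height_le_scaled R D0 PE) _ => /=.
have hx : weil_height_rat R (x%:~R / D%:~R) <= ln (K%:~R : R) + ln (D%:~R : R).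
  rewrite -ln_intrM // weil_height_ratE; apply: ler_ln_int (naive_height_gt0 _) _.
  apply: le_trans (naive_height_frac _ (lt0r_neq0 D0)) _.
  by rewrite ge_max xK gtr0_norm //= ler_peMl // ltW.
have hD : ln ((K ^+ 2 * C)%:~R : R) < ln (D%:~R : R).
  rewrite ltr_ln ?posrE ?ltr0z ?mulr_gt0 ?exprn_gt0 // ltr_int.
  by rewrite (lt_le_trans _ DK) // ltrDl.
move: hD; rewrite ln_intrM ?exprn_gt0 // rmorphXn lnXn ?ltr0z // -mulr_natl.
have := ln_dup_const_ge0 R A B.
lra.
Qed.
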